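(* Let $G$ be an $\alpha_1$-metric graph. Then $diam(C(G))\le 3$ and $rad(C(G))\le 2$.
   Context: All graphs are finite, connected, unweighted, undirected, simple; $d(u,v)$ is the shortest-path distance. $I(u,v)=\{x: d(u,x)+d(x,v)=d(u,v)\}$. A graph is $\alpha_1$-metric if for all vertices $u,v,w,x$: whenever $v\in I(u,w)$, $w\in I(v,x)$ and $v,w$ are adjacent, then $d(u,x)\ge d(u,v)+d(v,x)-1$. $e(v)=\max_u d(u,v)$, $rad(G)=\min_v e(v)$, $C(G)=\{v: e(v)=rad(G)\}$. Here $diam(C(G))$ and $rad(C(G))$ denote the diameter and radius of the subgraph of $G$ induced by $C(G)$ (this subgraph is connected). *)

From mathcomp Require Import all_boot.
Set Implicit Arguments. Unset Strict Implicit. Unset Printing Implicit Defensive.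

Section Graph.
Variable T : finType.

Fixpoint ball (e : rel T) (k : nat) (u : T) : {set T} :=
  match k with
  | 0 => [set u]
  | k'.+1 => ball e k' u :|: [set y | [exists x in ball e k' u, e x y]]
  end.

(* shortest-path distance: least k with v in ball e k u
   (equals #|T| if v is unreachable from u, which never happens in a
    connected graph, since distances are < #|T|) *)
Definition dist (e : rel T) (u v : T) : nat :=
  find (fun k => v \in ball e k u) (iota 0 #|T|).

Definition simple_graph (e : rel T) : Prop :=
  symmetric e /\ irreflexive e.

Definition connected_graph (e : rel T) : Prop :=
  forall u v : T, connect e u v.

Definition in_interval (e : rel T) (u v x : T) : bool :=
  dist e u x + dist e x v == dist e u v.

Definition alpha1_metric (e : rel T) : Prop :=
  forall u v w x : T,
    in_interval e u w v -> in_interval e v x w -> e v w ->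
    dist e u v + dist e v x - 1 <= dist e u x.

Definition ecc (e : rel T) (v : T) : nat := \max_(u : T) dist e u v.

Definition rad (e : rel T) : nat := \big[minn/#|T|]_(v : T) ecc e v.

Definition center (e : rel T) : {set T} := [set v | ecc e v == rad e].

Definition induced (e : rel T) (S : {set T}) : rel T :=
  fun x y => [&& e x y, x \in S & y \in S].

End Graph.

From mathcomp Require Import all_boot zify.

(* The alpha1 condition along an edge x z with z one step closer to y than x
   gives, for every vertex t, d(t,z) <= d(t,x) or d(t,z) + d(x,y) <= d(t,y) + 2.
   With d(x,y) >= 2 and x, y central, the second alternative also keeps t within
   the radius of z, so the center is geodesically convex and distances inside
   C(G) are distances of G.
   Two central vertices x, y at distance 4 are impossible: among the midpoints s
   of x and y pick one with the most common neighbours with x.  If some v were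
   at distance >= rad from s, the neighbour of x towards v is adjacent to every
   common neighbour of x and s, and leads to a midpoint h adjacent to s whose
   common neighbours with x strictly include those of s.  By convexity this
   bounds diam C(G) by 3.  For the radius, take a central c with the fewest
   central vertices at distance 3: if there were one, v, the neighbour of c
   towards v would be central with strictly fewer. *)

Set Implicit Arguments. Unset Strict Implicit. Unset Printing Implicit Defensive.

Section Ball.
Variables (T : finType) (e : rel T).

Lemma in_ball0 u v : (v \in ball e 0 u) = (v == u).
Proof. by rewrite /= in_set1. Qed.

Lemma in_ballS k u v :
  (v \in ball e k.+1 u) = (v \in ball e k u) || [exists x in ball e k u, e x v].
Proof. by rewrite /= in_setU in_set. Qed.

Lemma mem_ball_leq k k' u v : k <= k' -> v \in ball e k u -> v \in ball e k' u.
Proof.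
move=> /subnK <-; elim: (k' - k) => [|n IHn] // v_k.
by rewrite addSn in_ballS IHn.
Qed.

Lemma mem_ball_trans a b u v w :
  v \in ball e a u -> w \in ball e b v -> w \in ball e (a + b) u.
Proof.
move=> v_a; elim: b w => [|b IHb] w; first by rewrite in_ball0 addn0 => /eqP ->.
rewrite addnS !in_ballS => /orP[w_b | /existsP[z /andP[z_b ezw]]].
  by rewrite IHb.
by apply/orP; right; apply/existsP; exists z; rewrite IHb.
Qed.

Lemma edge_in_ball1 u v : e u v -> v \in ball e 1 u.
Proof.
move=> euv; rewrite in_ballS; apply/orP; right.
by apply/existsP; exists u; rewrite in_ball0 eqxx.
Qed.

Lemma path_last_in_ball x p : path e x p -> last x p \in ball e (size p) x.
Proof.
elim: p x => [|y p IHp] x /=; first by rewrite in_ball0.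
case/andP=> exy /IHp y_p.
by have := mem_ball_trans (edge_in_ball1 exy) y_p; rewrite add1n.
Qed.

Lemma ball_dist_leq k u v : v \in ball e k u -> dist e u v <= k.
Proof.
move=> v_k; rewrite /dist; case: (ltnP k #|T|) => [k_lt | k_ge].
  rewrite leqNgt; apply/negP => /(before_find 0).
  by rewrite nth_iota // add0n v_k.
by apply: leq_trans (find_size _ _) _; rewrite size_iota.
Qed.

Lemma dist_leq_card u v : dist e u v <= #|T|.
Proof. by rewrite /dist; apply: leq_trans (find_size _ _) _; rewrite size_iota. Qed.

End Ball.

Section Eccentricity.
Variables (T : finType) (e : rel T).
Local Notation d := (dist e).

Lemma dist_leq_ecc u v : d u v <= ecc e v.
Proof. by rewrite /ecc (bigD1 u) //= leq_maxl. Qed.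

Lemma ecc_leq v k : (forall u, d u v <= k) -> ecc e v <= k.
Proof. by move=> dk; apply/bigmax_leqP => u _; apply: dk. Qed.

Lemma rad_leq_ecc v : rad e <= ecc e v.
Proof.
rewrite /rad; elim: (index_enum T) (mem_index_enum v) => //= w s IHs.
rewrite in_cons big_cons => /orP[/eqP <- | v_s]; first exact: geq_minl.
by rewrite geq_min IHs ?orbT.
Qed.

Lemma center_dist_leq u c : c \in center e -> d u c <= rad e.
Proof. by rewrite inE => /eqP <-; apply: dist_leq_ecc. Qed.

Lemma center_of_dist_leq c : (forall u, d u c <= rad e) -> c \in center e.
Proof. by move=> dc; rewrite inE eqn_leq rad_leq_ecc andbT; apply: ecc_leq. Qed.

Lemma center_nonempty : 0 < #|T| -> exists c, c \in center e.
Proof.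
case/card_gt0P => v0 _; case: (arg_minnP (ecc e) (isT : predT v0)) => c _ c_min.
exists c; rewrite inE eqn_leq rad_leq_ecc andbT /rad.
apply: (big_ind (fun m => ecc e c <= m)) => [|a b ca cb|u _]; last exact: c_min.
  by apply: ecc_leq => u; apply: dist_leq_card.
by rewrite leq_min ca cb.
Qed.

End Eccentricity.

Section Graph.
Variables (T : finType) (e : rel T).
Hypotheses (e_sym : symmetric e) (e_irr : irreflexive e) (e_conn : connected_graph e).
Local Notation d := (dist e).

Lemma mem_ball_dist u v : v \in ball e (d u v) u.
Proof.
have [k k_lt v_k] : exists2 k, k < #|T| & v \in ball e k u.
  have /connectP[p e_p ->] := e_conn u v; case: (shortenP e_p) => p' e_p' uniq_p' _.
  exists (size p'); last exact: path_last_in_ball.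
  by have := max_card (mem (u :: p')); rewrite (card_uniqP uniq_p').
have reach : has (fun k => v \in ball e k u) (iota 0 #|T|).
  by apply/hasP; exists k; rewrite ?mem_iota.
have := nth_find 0 reach; rewrite nth_iota ?add0n //.
by move: reach; rewrite has_find size_iota.
Qed.

Lemma dist_leqP u v k : (d u v <= k) = (v \in ball e k u).
Proof.
apply/idP/idP => [|/ball_dist_leq //].
by move=> dk; apply: mem_ball_leq dk (mem_ball_dist u v).
Qed.

Lemma distxx u : d u u = 0.
Proof. by apply/eqP; rewrite -leqn0 dist_leqP in_ball0. Qed.

Lemma dist_eq0 u v : d u v = 0 -> u = v.
Proof. by move=> d0; have := mem_ball_dist u v; rewrite d0 in_ball0 => /eqP ->. Qed.

Lemma mem_ball_sym k u v : v \in ball e k u -> u \in ball e k v.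
Proof.
elim: k v => [|k IHk] v; first by rewrite !in_ball0 eq_sym.
rewrite in_ballS => /orP[v_k | /existsP[z /andP[z_k ezv]]].
  by apply: mem_ball_leq (IHk _ v_k).
have z_1 : z \in ball e 1 v by apply: edge_in_ball1; rewrite e_sym.
by have := mem_ball_trans z_1 (IHk _ z_k); rewrite add1n.
Qed.

Lemma distC u v : d u v = d v u.
Proof.
by apply/eqP; rewrite eqn_leq !dist_leqP; apply/andP; split; apply/mem_ball_sym/mem_ball_dist.
Qed.

Lemma dist_triangle u v w : d u w <= d u v + d v w.
Proof. by rewrite dist_leqP; apply: mem_ball_trans; apply: mem_ball_dist. Qed.

Lemma dist_edge u v : e u v -> d u v = 1.
Proof.
move=> euv; apply/eqP; rewrite eqn_leq dist_leqP edge_in_ball1 //= lt0n.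
by apply/eqP => /dist_eq0 eq_uv; move: euv; rewrite eq_uv e_irr.
Qed.

Lemma dist1_edge u v : d u v = 1 -> e u v.
Proof.
move=> d1; have := mem_ball_dist u v; rewrite d1 in_ballS in_ball0.
case/orP=> [/eqP eq_vu | /existsP[z]]; first by move: d1; rewrite eq_vu distxx.
by rewrite in_ball0 => /andP[/eqP -> ->].
Qed.

Lemma dist_last_step u v k : d u v = k.+1 -> exists2 z, e z v & d u z = k.
Proof.
move=> dS; have := mem_ball_dist u v; rewrite dS in_ballS.
case/orP=> [/ball_dist_leq | /existsP[z /andP[z_k ezv]]]; first by rewrite dS ltnn.
exists z => //; apply/eqP; rewrite eqn_leq dist_leqP z_k /=.
by have := dist_triangle u z v; rewrite dS (dist_edge ezv); lia.
Qed.

Lemma dist_first_step u v k : d u v = k.+1 -> exists2 z, e u z & d z v = k.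
Proof.
by rewrite distC => /dist_last_step[z ezu dz]; exists z; rewrite 1?e_sym 1?distC.
Qed.

Lemma dist_split u v j k : d u v = j + k -> exists z, d u z = j /\ d z v = k.
Proof.
elim: k v => [|k IHk] v; first by rewrite addn0 => duv; exists v; rewrite distxx.
rewrite addnS => duv; have [z ezv /IHk[w [duw dwz]]] := dist_last_step duv.
exists w; split=> //.
have := dist_triangle w z v; have := dist_triangle u w v; rewrite (dist_edge ezv); lia.
Qed.

Lemma dist_induced_leq (S : {set T}) u v :
    (forall x y z, x \in S -> y \in S -> in_interval e x y z -> z \in S) ->
    u \in S -> v \in S -> dist (induced e S) u v <= d u v.
Proof.
move=> S_convex u_S v_S; apply: ball_dist_leq.
suff ball_k k w : w \in S -> d u w <= k -> w \in ball (induced e S) k u by exact: ball_k.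
elim: k w => [|k IHk] w w_S dk.
  by rewrite in_ball0 (dist_eq0 (_ : d u w = 0)) //; lia.
rewrite in_ballS; case: (leqP (d u w) k) => [dk' | dkw]; first by rewrite IHk.
have [z ezw duz] : exists2 z, e z w & d u z = k by apply: dist_last_step; lia.
have z_S : z \in S.
  by apply: (S_convex u w) => //; rewrite /in_interval (dist_edge ezw) duz; lia.
by apply/orP; right; apply/existsP; exists z; rewrite IHk ?duz //= /induced ezw z_S w_S.
Qed.

Hypothesis e_alpha1 : alpha1_metric e.

Lemma alpha1_edge u v w x : e v w ->
  d u w = d u v + 1 -> d v x = d w x + 1 -> d u v + d w x <= d u x.
Proof.
move=> evw duw dvx; have := @e_alpha1 u v w x.
rewrite /in_interval (dist_edge evw) duw dvx add1n !addn1 !eqxx => /(_ isT isT evw); lia.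
Qed.

Lemma alpha1_step_toward t x z y : e x z -> d z y + 1 = d x y ->
  d t z <= d t x \/ d t z + d x y <= d t y + 2.
Proof.
move=> exz dzy; case: (leqP (d t z) (d t x)) => [|dxz]; [by left | right].
have := dist_triangle t x z; rewrite (dist_edge exz) => dtz.
have dz : d t z = d t x + 1 by lia.
have := alpha1_edge exz dz (esym dzy); lia.
Qed.

Lemma common_step_adjacent u c1 c2 z : e u c1 -> e u c2 ->
  d c1 z + 1 = d u z -> d c2 z + 1 = d u z -> c1 != c2 -> e c1 c2.
Proof.
move=> euc1 euc2 dc1z dc2z c1c2; apply/negPn/negP => n12.
have d12_neq0 : d c1 c2 <> 0 by move/dist_eq0/eqP; rewrite (negbTE c1c2).
have d12_neq1 : d c1 c2 <> 1 by move/dist1_edge; apply/negP.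
have dc1u : d c1 u = 1 by rewrite distC dist_edge.
have := dist_triangle c1 u c2; rewrite dc1u (dist_edge euc2) => d12_le.
have d12 : d c1 c2 = d c1 u + 1 by lia.
by have := alpha1_edge euc2 d12 (esym dc2z); lia.
Qed.

Lemma center_step_toward x y z : x \in center e -> y \in center e ->
  e x z -> d z y + 1 = d x y -> z \in center e.
Proof.
move=> x_c y_c exz dzy; have [/dist_eq0 -> // | dzy_gt0] := posnP (d z y).
apply: center_of_dist_leq => t.
have := center_dist_leq t x_c; have := center_dist_leq t y_c.
case: (alpha1_step_toward t exz dzy); lia.
Qed.

Lemma center_convex x y z : x \in center e -> y \in center e ->
  in_interval e x y z -> z \in center e.
Proof.
move=> + y_c /eqP; have [n dxz] : exists n, d x z = n by exists (d x z).
elim: n x dxz => [|n IHn] x dxz x_c dxzy; first by rewrite -(dist_eq0 dxz).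
have [x' exx' dx'z] := dist_first_step dxz.
have := dist_triangle x' z y; have := dist_triangle x x' y; rewrite (dist_edge exx').
move=> dxy_le dx'y_le; have dx'y : d x' y + 1 = d x y by lia.
by apply: (IHn x' dx'z (center_step_toward x_c y_c exx' dx'y)); lia.
Qed.

Lemma far_from_midpoint r x y s a v : d x y = 4 -> d s y = 2 ->
  e x a -> e a s -> d v x <= r -> d v y <= r -> r <= d v s ->
  [/\ d v a = r, d v x = r & d v s = r].
Proof.
move=> dxy dsy exa eas dvx dvy dvs.
have := dist_triangle x a y; have := dist_triangle a s y.
rewrite (dist_edge exa) (dist_edge eas) => day_le day_ge.
have day : d a y + 1 = d x y by lia.
have dsy' : d s y + 1 = d a y by lia.
have dvs_le : d v s <= d v a by case: (alpha1_step_toward v eas dsy'); lia.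
have dva_le : d v a <= d v x by case: (alpha1_step_toward v exa day); lia.
by split; lia.
Qed.

Definition common_neighbours x z : {set T} := [set a | e x a && e a z].

Section FourApart.
Variables (r : nat) (x y s v : T).
Hypotheses (x_ecc : forall t, d t x <= r) (y_ecc : forall t, d t y <= r).
Hypotheses (dxy : d x y = 4) (dxs : d x s = 2) (dsy : d s y = 2) (far_v : r <= d v s).

Lemma dist_v_x_s : d v x = r /\ d v s = r.
Proof.
have [a exa /dist1_edge eas] := dist_first_step (dxs : d x s = 1.+1).
by case: (far_from_midpoint dxy dsy exa eas (x_ecc v) (y_ecc v) far_v).
Qed.

Lemma dist_v_common_x a : e x a -> e a s -> d v a = r.
Proof.
by move=> exa eas; case: (far_from_midpoint dxy dsy exa eas (x_ecc v) (y_ecc v) far_v).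
Qed.

Lemma dist_v_common_y b : e y b -> e b s -> d v b = r.
Proof.
move=> eyb ebs; have dyx : d y x = 4 by rewrite distC.
have dsx : d s x = 2 by rewrite distC.
by case: (far_from_midpoint dyx dsx eyb ebs (y_ecc v) (x_ecc v) far_v).
Qed.

Section CloserNeighbour.
Variable xv : T.
Hypotheses (exxv : e x xv) (xv_closer : d v xv < d v x).

Lemma dist_v_xv : d v xv + 1 = r.
Proof.
have := dist_triangle v xv x; rewrite (distC xv) (dist_edge exxv).
by case: dist_v_x_s; lia.
Qed.

Lemma dist_xv_s : d xv s = 2.
Proof.
have [dvx dvs] := dist_v_x_s.
have dxvx : d xv x = 1 by rewrite distC dist_edge.
have := dist_triangle xv x s; rewrite dxvx dxs => dxvs_le.
have dxvs_neq0 : d xv s <> 0.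
  by move/dist_eq0 => xv_s; move: dxs; rewrite -xv_s (dist_edge exxv).
have dxvs_neq1 : d xv s <> 1.
  by move/dist1_edge/(dist_v_common_x exxv); have := dist_v_xv; lia.
have dxvs_neq3 : d xv s <> 3.
  move=> dxvs; have exvx : e xv x by rewrite e_sym.
  have dvx' : d v x = d v xv + 1 by rewrite dvx dist_v_xv.
  have dxvs' : d xv s = d x s + 1 by rewrite dxvs dxs.
  by have := alpha1_edge exvx dvx' dxvs'; rewrite dvs dxs -dist_v_xv; lia.
lia.
Qed.

Lemma dist_xv_y : d xv y = 3.
Proof.
have := dist_triangle x xv y; have := dist_triangle xv s y.
rewrite (dist_edge exxv) dist_xv_s dsy dxy => dxvy_le dxvy_ge.
have [dxvy | ] := eqVneq (d xv y) 4; last by lia.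
have [w exvw /dist1_edge ews] := dist_first_step (dist_xv_s : d xv s = 1.+1).
have dvxv_le : d v xv <= r by have := dist_v_xv; lia.
have [_ dvxv _] := far_from_midpoint dxvy dsy exvw ews dvxv_le (y_ecc v) far_v.
by have := dist_v_xv; lia.
Qed.

Lemma common_neighbour_adj_xv a : e x a -> e a s -> e xv a.
Proof.
move=> exa eas.
have := dist_triangle x a y; have := dist_triangle a s y.
rewrite (dist_edge exa) (dist_edge eas) dsy => day_le day_ge.
have day : d a y + 1 = d x y by lia.
have dxvy : d xv y + 1 = d x y by rewrite dist_xv_y dxy.
have xv_a : xv != a by apply/eqP => xv_a; move: dist_xv_s; rewrite xv_a (dist_edge eas).
exact: common_step_adjacent exxv exa dxvy day xv_a.
Qed.

Lemma dist_xv_b b : e y b -> e b s -> d xv b = 2.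
Proof.
move=> eyb ebs.
have [a exa /dist1_edge eas] := dist_first_step (dxs : d x s = 1.+1).
have exva := common_neighbour_adj_xv exa eas.
have dab : d a b = 2.
  have := dist_triangle a s b; have := dist_triangle x a b; have := dist_triangle x b y.
  rewrite (dist_edge exa) (dist_edge eas) (distC s) (dist_edge ebs).
  rewrite (distC b) (dist_edge eyb) dxy.
  lia.
have := dist_triangle xv a b; have := dist_triangle xv b y.
rewrite (dist_edge exva) dab (distC b) (dist_edge eyb) dist_xv_y => dxvb_ge dxvb_le.
have [dxvb | ] := eqVneq (d xv b) 3; last by lia.
have dva : d v a = d v xv + 1 by rewrite dist_v_xv (dist_v_common_x exa eas).
have dxvb' : d xv b = d a b + 1 by rewrite dxvb dab.
by have := alpha1_edge exva dva dxvb'; rewrite (dist_v_common_y eyb ebs) dab -dist_v_xv; lia.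
Qed.

Lemma next_midpoint b h : e y b -> e b s -> e xv h -> e h b ->
  [/\ d x h = 2, d h y = 2 & e h s].
Proof.
move=> eyb ebs exvh ehb.
have := dist_triangle x xv h; have := dist_triangle h b y; have := dist_triangle x h y.
rewrite (dist_edge exxv) (dist_edge exvh) (dist_edge ehb) (distC b) (dist_edge eyb) dxy.
move=> dxhy dhy_le dxh_le; have dxh : d x h = 2 by lia.
have dhy : d h y = 2 by lia.
split=> //.
have := dist_triangle y b x; have := dist_triangle b s x.
rewrite (dist_edge eyb) (dist_edge ebs) (distC s) dxs (distC y) dxy => dbx_le dbx_ge.
have ebh : e b h by rewrite e_sym.
have dhx : d h x + 1 = d b x by rewrite distC dxh; lia.
have dsx : d s x + 1 = d b x by rewrite distC dxs; lia.
apply: (common_step_adjacent ebh ebs dhx dsx).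
by apply/eqP => h_s; move: dist_xv_s; rewrite -h_s (dist_edge exvh).
Qed.

Lemma common_neighbours_proper h : e xv h -> d x h = 2 -> e h s ->
  common_neighbours x s \proper common_neighbours x h.
Proof.
move=> exvh dxh ehs; apply/properP; split; last first.
  exists xv; rewrite !inE exxv ?exvh //=.
  by apply/negP => /dist_edge; rewrite dist_xv_s.
apply/subsetP => a; rewrite !inE => /andP[exa eas]; rewrite exa /=.
have eaxv : e a xv by rewrite e_sym common_neighbour_adj_xv.
apply/negPn/negP => n_ah.
have dah : d a h = 2.
  have := dist_triangle a xv h; rewrite (dist_edge eaxv) (dist_edge exvh).
  have : d a h <> 0 by move/dist_eq0 => a_h; move: dxh; rewrite -a_h (dist_edge exa).
  have : d a h <> 1 by move/dist1_edge; apply/negP.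
  lia.
have xv_s : xv != s by apply/eqP => xv_s; move: dist_xv_s; rewrite xv_s distxx.
have dxvh : d xv h + 1 = d a h by rewrite (dist_edge exvh) dah.
have dsh : d s h + 1 = d a h by rewrite distC (dist_edge ehs) dah.
by have /dist_edge := common_step_adjacent eaxv eas dxvh dsh xv_s; rewrite dist_xv_s.
Qed.

End CloserNeighbour.

Lemma midpoint_improvable : exists2 h, (d x h == 2) && (d h y == 2) &
  #|common_neighbours x s| < #|common_neighbours x h|.
Proof.
have r_ge4 : 4 <= r by have := x_ecc y; rewrite distC dxy.
have [dvx _] := dist_v_x_s.
have dvx' : d v x = r.-1.+1 by lia.
have [xv exvx dvxv] := dist_last_step dvx'.
have exxv : e x xv by rewrite e_sym.
have xv_closer : d v xv < d v x by lia.
have dys : d y s = 1.+1 by rewrite distC.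
have [b eyb /dist1_edge ebs] := dist_first_step dys.
have dxvb := dist_xv_b exxv xv_closer eyb ebs.
have [h exvh /dist1_edge ehb] := dist_first_step (dxvb : d xv b = 1.+1).
have [dxh dhy ehs] := next_midpoint exxv xv_closer eyb ebs exvh ehb.
exists h; first by rewrite dxh dhy.
exact/proper_card/(common_neighbours_proper exxv xv_closer exvh dxh ehs).
Qed.

End FourApart.

Lemma midpoint_ecc_lt r x y : (forall t, d t x <= r) -> (forall t, d t y <= r) ->
  d x y = 4 -> exists s, [/\ d x s = 2, d s y = 2 & forall t, d t s < r].
Proof.
move=> x_ecc y_ecc dxy.
have [s0 [dxs0 ds0y]] := dist_split (dxy : d x y = 2 + 2).
pose midpoint s := (d x s == 2) && (d s y == 2).
have midpoint_s0 : midpoint s0 by rewrite /midpoint dxs0 ds0y.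
case: (arg_maxnP (fun s => #|common_neighbours x s|) midpoint_s0).
move=> s /andP[/eqP dxs /eqP dsy] s_max; exists s; split=> // t.
rewrite ltnNge; apply/negP => far_t.
have [h midpoint_h improved] := midpoint_improvable x_ecc y_ecc dxy dxs dsy far_t.
by have /(leq_trans improved) := s_max h midpoint_h; rewrite ltnn.
Qed.

Lemma center_dist_neq4 x y : x \in center e -> y \in center e -> d x y != 4.
Proof.
move=> x_c y_c; apply/eqP => dxy.
have x_ecc t : d t x <= rad e by apply: center_dist_leq.
have y_ecc t : d t y <= rad e by apply: center_dist_leq.
have [s [_ _ s_close]] := midpoint_ecc_lt x_ecc y_ecc dxy.
have rad_gt0 : 0 < rad e by have := s_close s; rewrite distxx.
have : ecc e s <= (rad e).-1 by apply: ecc_leq => t; have := s_close t; lia.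
by have := rad_leq_ecc e s; lia.
Qed.

Lemma center_dist_leq3 x y : x \in center e -> y \in center e -> d x y <= 3.
Proof.
move=> x_c y_c; rewrite leqNgt; apply/negP => dxy_gt3.
have dxy : d x y = 4 + (d x y - 4) by lia.
have [z [dxz dzy]] := dist_split dxy.
have z_c : z \in center e by apply: (center_convex x_c y_c); rewrite /in_interval dxz dzy; lia.
by have /eqP := center_dist_neq4 x_c z_c.
Qed.

Definition far_center c : {set T} := [set z in center e | 3 <= d c z].

Lemma far_center_step c v : c \in center e -> v \in center e -> d c v = 3 ->
  exists2 c', c' \in center e & far_center c' \proper far_center c.
Proof.
move=> c_c v_c dcv; have [c' ecc' dc'v] := dist_first_step (dcv : d c v = 2.+1).
have dc'v' : d c' v + 1 = d c v by rewrite dc'v dcv.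
have c'_c := center_step_toward c_c v_c ecc' dc'v'.
exists c' => //; apply/properP; split; last first.
  exists v; first by apply/setIdP; rewrite dcv.
  by apply/setIdP => -[]; rewrite dc'v.
apply/subsetP => t /setIdP[t_c dc't]; apply/setIdP; split=> //.
have := center_dist_leq3 t_c v_c; rewrite (distC c') (distC c) in dc't *.
by case: (alpha1_step_toward t ecc' dc'v'); lia.
Qed.

Lemma center_radius_le2 : 0 < #|T| ->
  exists2 c, c \in center e & forall v, v \in center e -> d c v <= 2.
Proof.
move=> /(center_nonempty e)[c0 c0_c].
case: (arg_minnP (fun c => #|far_center c|) c0_c) => c c_c c_min.
exists c => // v v_c; rewrite leqNgt; apply/negP => dcv_gt2.
have dcv : d c v = 3 by have := center_dist_leq3 c_c v_c; lia.
have [c' c'_c /proper_card] := far_center_step c_c v_c dcv.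
by rewrite ltnNge c_min.
Qed.

End Graph.

Theorem corollary11 (T : finType) (e : rel T) :
  0 < #|T| ->
  simple_graph e -> connected_graph e -> alpha1_metric e ->
  (* diam(C(G)) <= 3 *)
  (forall u v, u \in center e -> v \in center e ->
     dist (induced e (center e)) u v <= 3) /\
  (* rad(C(G)) <= 2 *)
  (exists2 c, c \in center e &
     forall v, v \in center e -> dist (induced e (center e)) c v <= 2).
Proof.
move=> T_gt0 [e_sym e_irr] e_conn e_alpha1.
have induced_leq u v : u \in center e -> v \in center e ->
    dist (induced e (center e)) u v <= dist e u v.
  by apply: dist_induced_leq => // x y z; apply: center_convex.
have diam_le := center_dist_leq3 e_sym e_irr e_conn e_alpha1.
have [c c_c c_radius] := center_radius_le2 e_sym e_irr e_conn e_alpha1 T_gt0.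
split=> [u v u_c v_c | ].
  exact: leq_trans (induced_leq u v u_c v_c) (diam_le u v u_c v_c).
by exists c => // v v_c; apply: leq_trans (induced_leq c v c_c v_c) (c_radius v v_c).
Qed.
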